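(* Let $M_{\mathbf a}$ be a Brieskorn manifold of dimension $5$ or $7$ (i.e. $n=3$ or $n=4$) with all exponents $a_j\ge 2$, whose natural Sasakian structure is regular and positive. Then, up to reordering of the coordinates, (1) if $n=3$: $\mathbf a\in\{(2,2,2,2),(3,3,3,3),(4,4,4,2),(6,6,3,2)\}$; (2) if $n=4$: $\mathbf a\in\{(2,2,2,2,2),(3,3,3,3,3),(4,4,4,4,4),(4,4,4,4,2),(6,6,6,6,2),(6,6,6,3,2)\}$.
   Context: For a degree $d$, weight vector $\mathbf w=(w_0,\dots,w_n)\in(\mathbb Z^+)^{n+1}$ and exponents $a_i=d/w_i\in\mathbb Z^+$, the Brieskorn–Pham polynomial is $f_{\mathbf a}(\mathbf z)=z_0^{a_0}+\dots+z_n^{a_n}$ and the Brieskorn manifold is $M_{\mathbf a}=\{f_{\mathbf a}=0\}\cap S^{2n+1}\subset\mathbb C^{n+1}$, of dimension $2n-1$. It carries a natural Sasakian structure whose Reeb field generates the weighted circle action $\lambda\cdot\mathbf z=(\lambda^{w_0}z_0,\dots,\lambda^{w_n}z_n)$. This structure is regular if and only if the weights $w_j$ are pairwise relatively prime, and it is positive if and only if $|\mathbf w|-d>0$, where $|\mathbf w|=\sum_jw_j$. *)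

From mathcomp Require Import all_boot.
Set Implicit Arguments. Unset Strict Implicit. Unset Printing Implicit Defensive.

(* Brieskorn data: degree d, weights w : 'I_n.+1 -> nat, exponents a_i = d / w_i. *)
Definition bp_data (n d : nat) (w : 'I_n.+1 -> nat) : Prop :=
  0 < d /\ (forall i, 0 < w i) /\ (forall i, w i %| d).

Definition exponent (n d : nat) (w : 'I_n.+1 -> nat) (i : 'I_n.+1) : nat :=
  d %/ w i.

Definition exponents (n d : nat) (w : 'I_n.+1 -> nat) : seq nat :=
  [seq exponent d w i | i <- enum 'I_n.+1].

(* The natural Sasakian structure is regular iff the weights are pairwise coprime. *)
Definition regular (n : nat) (w : 'I_n.+1 -> nat) : Prop :=
  forall i j : 'I_n.+1, i != j -> coprime (w i) (w j).

(* ... and positive iff |w| - d > 0. *)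
Definition positive (n d : nat) (w : 'I_n.+1 -> nat) : Prop :=
  d < \sum_(i < n.+1) w i.

Definition list_n3 : seq (seq nat) :=
  [:: [:: 2; 2; 2; 2]; [:: 3; 3; 3; 3]; [:: 4; 4; 4; 2]; [:: 6; 6; 3; 2]].

Definition list_n4 : seq (seq nat) :=
  [:: [:: 2; 2; 2; 2; 2]; [:: 3; 3; 3; 3; 3]; [:: 4; 4; 4; 4; 4];
      [:: 4; 4; 4; 4; 2]; [:: 6; 6; 6; 6; 2]; [:: 6; 6; 6; 3; 2]].

From mathcomp Require Import all_boot zify.

(** Pairwise coprime weights all dividing d have pairwise products dividing d, so
   w_i w_j <= d. Together with positivity d < sum_j w_j and a_i >= 2, i.e. 2 w_i <= d,
   this forces w_i < 2n, hence d < (n+1) 2n. The remaining finitely many weight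
   vectors (entries among the divisors of d below 2n) are classified by computation. *)

Fixpoint words {T : Type} (s : seq T) (m : nat) : seq (seq T) :=
  if m is m'.+1 then [seq x :: t | x <- s, t <- words s m'] else [:: [::]].

Lemma words_size (T : eqType) (s t : seq T) : {subset t <= s} -> t \in words s (size t).
Proof.
elim: t => [|x t IHt] //= ts; apply: allpairs_f; first exact/ts/mem_head.
by apply: IHt => y yt; apply/ts; rewrite inE yt orbT.
Qed.

Definition candidate_weights (n d : nat) : seq nat :=
  [seq x <- iota 0 n.*2 | (x %| d) && (2 <= d %/ x)].

Definition classification_check (n : nat) (L : seq (seq nat)) : bool :=
  all (fun d => all (fun ws =>
         pairwise coprime ws && (d < sumn ws) ==> has (perm_eq [seq d %/ x | x <- ws]) L)
       (words (candidate_weights n d) n.+1))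
    (iota 0 (n.+1 * n.*2)).

Section BrieskornWeights.

Variables (n d : nat) (w : 'I_n.+1 -> nat).
Hypotheses (d_gt0 : 0 < d) (w_dvd : forall i, w i %| d).
Hypothesis exponent_ge2 : forall i, 2 <= exponent d w i.
Hypothesis w_regular : regular w.
Hypothesis w_positive : positive d w.

Lemma weight_gt0 i : 0 < w i.
Proof. exact: dvdn_gt0 d_gt0 (w_dvd i). Qed.

Lemma double_weight_le i : 2 * w i <= d.
Proof. by rewrite -leq_divRL ?weight_gt0 //; apply: exponent_ge2. Qed.

Lemma weight_mul_le i j : i != j -> w i * w j <= d.
Proof. by move=> ij; apply: dvdn_leq => //; rewrite Gauss_dvd ?w_dvd ?w_regular. Qed.

Lemma weight_mul_others_le i : w i * \sum_(j | j != i) w j <= n * d.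
Proof.
rewrite big_distrr /=; apply: (@leq_trans (\sum_(j | j != i) d)).
  by apply: leq_sum => j ji; rewrite weight_mul_le // eq_sym.
by rewrite sum_nat_const cardC1 card_ord.
Qed.

(* With [r] the sum of the other weights: [w_i d < w_i (w_i + r) <= w_i^2 + n d <= w_i d / 2 + n d]. *)
Lemma weight_lt i : w i < n.*2.
Proof.
have d_lt_sum : d < w i + \sum_(j | j != i) w j by have := w_positive; rewrite /positive (bigD1 i).
have := weight_mul_others_le i; have := double_weight_le i; have := weight_gt0 i.
nia.
Qed.

Lemma degree_lt : d < n.+1 * n.*2.
Proof.
apply: (leq_trans w_positive); apply: (@leq_trans (\sum_(i < n.+1) n.*2)).
  by apply: leq_sum => i _; apply: ltnW (weight_lt i).
by rewrite sum_nat_const card_ord.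
Qed.

Lemma exponents_classified L :
  classification_check n L -> exists2 s, s \in L & perm_eq (exponents d w) s.
Proof.
move=> check; set ws := [seq w i | i <- enum 'I_n.+1].
have ws_candidates : {subset ws <= candidate_weights n d}.
  by move=> _ /mapP[i _ ->]; rewrite mem_filter w_dvd exponent_ge2 mem_iota weight_lt.
have ws_coprime : pairwise coprime ws.
  rewrite pairwise_map; apply: (sub_pairwise (r := [rel i j | i != j])).
    by move=> i j; apply: w_regular.
  by rewrite -uniq_pairwise enum_uniq.
have ws_sum : d < sumn ws by rewrite sumnE big_map big_enum.
have d_range : d \in iota 0 (n.+1 * n.*2) by rewrite mem_iota degree_lt.
have ws_words : ws \in words (candidate_weights n d) n.+1.
  by rewrite -(size_enum_ord n.+1) -(size_map w); apply: words_size.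
have := allP (allP check d d_range) ws ws_words.
rewrite ws_coprime ws_sum => /hasP[s sL ws_s].
by exists s; last by rewrite -map_comp in ws_s.
Qed.

End BrieskornWeights.

Theorem proposition3p13 (n d : nat) (w : 'I_n.+1 -> nat) :
  (n = 3 \/ n = 4) ->
  bp_data d w ->
  (forall i, 2 <= exponent d w i) ->
  regular w ->
  positive d w ->
  (n = 3 -> exists2 s, s \in list_n3 & perm_eq (exponents d w) s) /\
  (n = 4 -> exists2 s, s \in list_n4 & perm_eq (exponents d w) s).
Proof.
move=> _ [d_gt0 [_ w_dvd]] exponent_ge2 w_regular w_positive.
by split=> n_eq; subst n; apply: exponents_classified => //; vm_compute.
Qed.
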